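(* If $Q$ is a quantity space over a field $K$, then $Q$ is distributive: for all dimensions $\mathsf{A},\mathsf{B}\in Q/{\sim}$, all $x,y\in\mathsf{A}$ and all $z\in\mathsf{B}$ we have $(x+y)z=xz+yz$ and $z(x+y)=zx+zy$.
   Context: A scalable monoid over a (unital, associative) ring $R$ is a monoid $X$ (identity $1_X$, product written $xy$) together with a map $R\times X\to X$, $(\alpha,x)\mapsto\alpha\cdot x$, such that $1\cdot x=x$, $\alpha\cdot(\beta\cdot x)=\alpha\beta\cdot x$ and $\alpha\cdot(xy)=(\alpha\cdot x)y=x(\alpha\cdot y)$. A quantity space over a field $K$ is a commutative scalable monoid $Q$ over $K$ for which there exists a basis, i.e. a finite set $\{e_1,\ldots,e_n\}$ of invertible elements of $Q$ such that every $x\in Q$ has a unique expansion $x=\mu\cdot\prod_{i=1}^n e_i^{k_i}$ with $\mu\in K$ and $k_i\in\mathbb{Z}$. On $Q$, $x\sim y$ iff $\alpha\cdot x=\beta\cdot y$ for some $\alpha,\beta\in K$; classes are dimensions. A unit element for a class $\mathsf{C}$ is some $u\in\mathsf{C}$ such that every $x\in\mathsf{C}$ equals $\lambda\cdot u$ for some $\lambda\in K$ and $\lambda\cdot u=\lambda'\cdot u$ implies $\lambda=\lambda'$. If $u$ is a unit element for $\mathsf{C}$ and $x=\rho\cdot u$, $y=\sigma\cdot u$, then $x+y:=(\rho+\sigma)\cdot u$ (independent of the choice of $u$); every dimension of a quantity space has a unit element, so this sum is defined for any two elements of the same dimension. *)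

From HB Require Import structures.
From mathcomp Require Import all_boot all_order all_algebra.
From Stdlib Require Import ClassicalEpsilon.
Set Implicit Arguments. Unset Strict Implicit. Unset Printing Implicit Defensive.
Import GRing.Theory.
Local Open Scope ring_scope.

Record scalable_monoid (K : fieldType) := ScalableMonoid {
  carrier :> Type;
  smul : carrier -> carrier -> carrier;
  sone : carrier;
  sscale : K -> carrier -> carrier;
  smulA : forall x y z, smul x (smul y z) = smul (smul x y) z;
  smul1x : forall x, smul sone x = x;
  smulx1 : forall x, smul x sone = x;
  sscale1 : forall x, sscale 1 x = x;
  sscaleA : forall a b x, sscale a (sscale b x) = sscale (a * b) x;
  sscale_mull : forall a x y, sscale a (smul x y) = smul (sscale a x) y;
  sscale_mulr : forall a x y, sscale a (smul x y) = smul x (sscale a y)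
}.

Section Defs.
Variables (K : fieldType) (Q : scalable_monoid K).

Definition smul_comm : Prop := forall x y : Q, smul x y = smul y x.

Definition sinvertible (e : Q) : Prop :=
  exists f : Q, smul e f = sone Q /\ smul f e = sone Q.

Definition snpow (e : Q) (k : nat) : Q := iter k (smul e) (sone Q).

(* integer power e^k, given an inverse f of e *)
Definition szpow (e f : Q) (k : int) : Q :=
  match k with
  | Posz m => snpow e m
  | Negz m => snpow f m.+1
  end.

Definition basis_mono (n : nat) (e f : 'I_n -> Q) (k : 'I_n -> int) : Q :=
  \big[@smul K Q / sone Q]_(i < n) szpow (e i) (f i) (k i).

Definition is_basis (n : nat) (e : 'I_n -> Q) : Prop :=
  exists f : 'I_n -> Q,
    (forall i, smul (e i) (f i) = sone Q /\ smul (f i) (e i) = sone Q) /\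
    (forall x : Q, exists (mu : K) (k : 'I_n -> int),
        x = sscale mu (basis_mono e f k)) /\
    (forall (mu mu' : K) (k k' : 'I_n -> int),
        sscale mu (basis_mono e f k) = sscale mu' (basis_mono e f k') ->
        mu = mu' /\ forall i, k i = k' i).

Definition quantity_space : Prop :=
  smul_comm /\ exists (n : nat) (e : 'I_n -> Q), is_basis e.

Definition ssim (x y : Q) : Prop := exists a b : K, sscale a x = sscale b y.

Definition unit_elem_of (u x : Q) : Prop :=
  ssim u x /\
  (forall w, ssim w x -> exists lam : K, w = sscale lam u) /\
  (forall lam lam' : K, sscale lam u = sscale lam' u -> lam = lam').

Definition is_qsum (x y s : Q) : Prop :=
  exists (u : Q) (rho sigma : K),
    unit_elem_of u x /\ x = sscale rho u /\ y = sscale sigma u /\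
    s = sscale (rho + sigma) u.

(* the sum x + y (well defined for x ~ y in a quantity space) *)
Definition qsum (x y : Q) : Q := epsilon (inhabits x) (is_qsum x y).

End Defs.

(* Every element of a quantity space is a scalar multiple mu . M k of a basis
   monomial, and elements of the same dimension share the monomial, so the
   monomials are unit elements.  Whichever unit element u with x = rho . u and
   y = sigma . u the sum x + y is computed with, it equals (rho + sigma) . u.
   A map g commuting with scaling, such as multiplication by z on either side,
   sends u to a scalar multiple of a unit element of the dimension of g x, and
   therefore commutes with the sum. *)
From mathcomp Require Import all_boot all_order all_algebra.
From Stdlib Require Import ClassicalEpsilon.
Set Implicit Arguments. Unset Strict Implicit.
Import GRing.Theory.
Local Open Scope ring_scope.

Section UnitElements.
Variables (K : fieldType) (Q : scalable_monoid K).

Lemma ssim_refl (x : Q) : ssim x x.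
Proof. by exists 1, 1. Qed.

Lemma ssim_sym (x y : Q) : ssim x y -> ssim y x.
Proof. by move=> [a [b eq_ab]]; exists b, a. Qed.

Lemma qsum_unit (u x y : Q) (rho sigma : K) :
  unit_elem_of u x -> x = sscale rho u -> y = sscale sigma u ->
  qsum x y = sscale (rho + sigma) u.
Proof.
move=> u_unit x_u y_u.
have [_ [u_spans u_inj]] := u_unit.
have : is_qsum x y (qsum x y).
  apply: (epsilon_spec (inhabits x) (is_qsum x y)).
  by exists (sscale (rho + sigma) u), u, rho, sigma.
move=> [v [rho' [sigma' [[v_x _] [x_v [y_v ->]]]]]].
have [lam v_u] := u_spans v v_x.
have rho_eq : rho' * lam = rho by apply: u_inj; rewrite -sscaleA -v_u -x_v.
have sigma_eq : sigma' * lam = sigma by apply: u_inj; rewrite -sscaleA -v_u -y_v.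
by rewrite v_u sscaleA mulrDl rho_eq sigma_eq.
Qed.

Hypothesis has_unit_elem : forall x : Q, exists u : Q, unit_elem_of u x.

Lemma qsum_homog (g : Q -> Q) (x y : Q) :
  (forall (a : K) (w : Q), g (sscale a w) = sscale a (g w)) ->
  ssim x y -> g (qsum x y) = qsum (g x) (g y).
Proof.
move=> g_homog xy.
have [u u_unit] := has_unit_elem x.
have [_ [u_spans _]] := u_unit.
have [rho x_u] := u_spans x (ssim_refl x).
have [sigma y_u] := u_spans y (ssim_sym xy).
have [v v_unit] := has_unit_elem (g x).
have [_ [v_spans _]] := v_unit.
have [c gu_v] : exists c, g u = sscale c v.
  by apply: v_spans; exists rho, 1; rewrite sscale1 x_u g_homog.
rewrite (qsum_unit u_unit x_u y_u).
rewrite (qsum_unit v_unit (rho := rho * c) (sigma := sigma * c)).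
- by rewrite g_homog gu_v !sscaleA mulrDl.
- by rewrite x_u g_homog gu_v sscaleA.
- by rewrite y_u g_homog gu_v sscaleA.
Qed.

End UnitElements.

Section Basis.
Variables (K : fieldType) (Q : scalable_monoid K) (n : nat) (e : 'I_n -> Q).

Lemma basis_mono_ext (f : 'I_n -> Q) (k k' : 'I_n -> int) :
  (forall i, k i = k' i) -> basis_mono e f k = basis_mono e f k'.
Proof. by move=> eq_k; apply: eq_bigr => i _; rewrite eq_k. Qed.

Lemma is_basis_unit_elem : is_basis e -> forall x : Q, exists u, unit_elem_of u x.
Proof.
move=> [f [_ [expand uniq_expand]]] x.
have [mu [k x_k]] := expand x.
exists (basis_mono e f k); split; [|split].
- by exists mu, 1; rewrite sscale1 x_k.
- move=> w [a [b ab_w]]; have [d [k' w_k']] := expand w.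
  exists d; rewrite w_k'; congr sscale.
  move: ab_w; rewrite w_k' x_k !sscaleA => /uniq_expand [_ eq_k].
  exact: basis_mono_ext.
- by move=> lam lam' /uniq_expand [].
Qed.

End Basis.

Theorem proposition3p11 (K : fieldType) (Q : scalable_monoid K) :
  quantity_space Q ->
  forall x y z : Q, ssim x y ->
    smul (qsum x y) z = qsum (smul x z) (smul y z) /\
    smul z (qsum x y) = qsum (smul z x) (smul z y).
Proof.
move=> [_ [n [e /is_basis_unit_elem has_unit_elem]]] x y z xy.
split.
- apply: (qsum_homog has_unit_elem (g := fun w => smul w z) _ xy) => a w.
  by rewrite sscale_mull.
- apply: (qsum_homog has_unit_elem (g := smul z) _ xy) => a w.
  by rewrite sscale_mulr.
Qed.
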